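(* Let $k$ be a perfect field of characteristic $p>0$, $R=k[x_1,\ldots,x_n]$, and let $f_1,\ldots,f_m\in R$ be a regular sequence, $A=R/(f_1,\ldots,f_m)$. For each $i$ fix a lift $\widetilde f_i\in W_2(k)[x_1,\ldots,x_n]$ of $f_i$ and set $P_{f_i}=P(\widetilde f_i)$. Then $\operatorname{Spec}A$ is Frobenius liftable if and only if there exist $h_1,\ldots,h_n\in R$ and $g_1,\ldots,g_m\in R$ such that for every $i\in\{1,\ldots,m\}$ $$P_{f_i}+g_i^p\equiv\sum_{k=1}^n\Big(\frac{\partial f_i}{\partial x_k}\Big)^ph_k\pmod{(f_1,\ldots,f_m)}.$$
   Context: $W_2(k)$ is the ring of length-$2$ Witt vectors with Frobenius $\sigma(a_0,a_1)=(a_0^p,a_1^p)$. Let $\widetilde R=W_2(k)[x_1,\ldots,x_n]$ and $\widetilde F:\widetilde R\to\widetilde R$, $\sum_Ia_Ix^I\mapsto\sum_I\sigma(a_I)x^{pI}$. For $\widetilde f\in\widetilde R$, $P(\widetilde f)\in R$ is the unique element with $pP(\widetilde f)=\widetilde F(\widetilde f)-\widetilde f^p$ (using $R\cong p\widetilde R$ via multiplication by $p$); changing the lift of $f$ changes $P$ by an arbitrary $p$-th power. A $k$-scheme $Y$ is Frobenius liftable if there are a flat $W_2(k)$-scheme $\widetilde Y$ with $\widetilde Y\times_{W_2(k)}\operatorname{Spec}k\cong Y$ and a morphism $\widetilde F:\widetilde Y\to\widetilde Y$ over $\sigma$ restricting to the absolute Frobenius of $Y$. *)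

From HB Require Import structures.
From mathcomp Require Import all_boot all_order all_algebra.
From mathcomp Require Import mpoly.
Set Implicit Arguments. Unset Strict Implicit. Unset Printing Implicit Defensive.
Import GRing.Theory.
Local Open Scope ring_scope.

Definition in_ideal (R : comNzRingType) (m : nat) (f : 'I_m -> R) (x : R) : Prop :=
  exists c : 'I_m -> R, x = \sum_(j < m) c j * f j.

Definition in_ideal_lt (R : comNzRingType) (m : nat) (f : 'I_m -> R) (i : nat)
    (x : R) : Prop :=
  exists c : 'I_m -> R, x = \sum_(j < m | (j < i)%N) c j * f j.

Definition regular_seq (R : comNzRingType) (m : nat) (f : 'I_m -> R) : Prop :=
  (forall (i : 'I_m) (g : R),
      in_ideal_lt f i (g * f i) -> in_ideal_lt f i g)
  /\ ~ in_ideal f 1.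

Definition perfect_field (k : fieldType) (p : nat) : Prop :=
  forall x : k, exists y : k, y ^+ p = x.

(* W together with piW : W -> k and sigma : W -> W is (isomorphic to) the ring
   W_2(k) of length-2 Witt vectors with its Witt vector Frobenius:
   piW is surjective, ker piW = pW, and multiplication by p induces
   W/pW = k  ~=  pW (i.e. p w = 0 iff w in ker piW); sigma lifts Frobenius.
   For perfect k these properties characterize (W_2(k), sigma) uniquely up to
   unique isomorphism. *)
Definition is_W2 (k : fieldType) (p : nat) (W : comNzRingType)
    (piW : {rmorphism W -> k}) (sigma : {rmorphism W -> W}) : Prop :=
  [/\ forall x : k, exists w : W, piW w = x,
      forall w : W, piW w = 0 <-> exists v : W, w = p%:R * v,
      forall w : W, p%:R * w = 0 <-> piW w = 0
    & forall w : W, piW (sigma w) = piW w ^+ p].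

Definition Ftilde (W : comNzRingType) (n p : nat) (sigma : {rmorphism W -> W})
    (F : {mpoly W[n]}) : {mpoly W[n]} :=
  mmap (fun c : W => (sigma c)%:MP_[n]) (fun i : 'I_n => 'X_i ^+ p) F.

(* Pf = P(Ft): p * (any lift of Pf) = Ftilde(Ft) - Ft^p.  (This determines Pf
   uniquely since R ~= p W[x] via multiplication by p.) *)
Definition is_P (k : fieldType) (p : nat) (W : comNzRingType) (n : nat)
    (piW : {rmorphism W -> k}) (sigma : {rmorphism W -> W})
    (Ft : {mpoly W[n]}) (Pf : {mpoly k[n]}) : Prop :=
  exists Pt : {mpoly W[n]},
    map_mpoly piW Pt = Pf /\ (p%:R : W) *: Pt = Ftilde p sigma Ft - Ft ^+ p.

(* Spec A, A = k[x_1..x_n]/(f_1..f_m), is Frobenius liftable: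
   there is a flat W_2(k)-algebra At (flatness over W_2(k) expressed by the
   local criterion: p-torsion of At equals p At), a k-algebra isomorphism
   At/pAt ~= A (realized by surjections piA : At -> B, q : k[x] -> B with
   kernels p At and (f_1..f_m), compatible with the k-structures), and a ring
   endomorphism Ft of At over sigma reducing to the absolute Frobenius of A. *)
Definition frobenius_liftable (k : fieldType) (p : nat) (W : comNzRingType)
    (piW : {rmorphism W -> k}) (sigma : {rmorphism W -> W}) (n m : nat)
    (f : 'I_m -> {mpoly k[n]}) : Prop :=
  exists (At : comPzRingType) (iota : {rmorphism W -> At})
         (Ft : {rmorphism At -> At}) (B : comPzRingType)
         (q : {rmorphism {mpoly k[n]} -> B}) (piA : {rmorphism At -> B}),
    (forall a : At, iota p%:R * a = 0 -> exists b : At, a = iota p%:R * b)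
    /\ (forall a : At, piA a = 0 <-> exists b : At, a = iota p%:R * b)
    /\ (forall b : B, exists a : At, piA a = b)
    /\ (forall r : {mpoly k[n]}, q r = 0 <-> in_ideal f r)
    /\ (forall b : B, exists r : {mpoly k[n]}, q r = b)
    /\ (forall w : W, piA (iota w) = q (piW w)%:MP_[n])
    /\ (forall w : W, Ft (iota w) = iota (sigma w))
    /\ (forall a : At, piA (Ft a) = piA a ^+ p).

(* A Frobenius lift of Spec A is, up to isomorphism, W[x]/(F) with
   F_i = ft_i + p u_i lifting f_i, equipped with the endomorphism induced by a
   substitution x_j |-> x_j^p + p h_j twisted by sigma.  Flatness of W[x]/(F)
   over W_2(k) comes from the regularity of f: relations among the f_i lift to
   relations among the F_i modulo p.  Since p^2 = 0, the substitution is the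
   first-order Taylor expansion Ftilde(G) + p sum_j Ftilde(d_j G) h_j, and with
   Ftilde(ft_i) = ft_i^p + p P_{f_i} it sends F_i to an element of
   F_i W[x] + p (P_{f_i} + u_i^p + sum_j Ftilde(d_j ft_i) h_j).  Hence it
   preserves (F) iff the reduction of the last factor lies in (f), which is the
   stated congruence with g_i = u_i mod p and h_j replaced by its negative. *)

From HB Require Import structures.
From mathcomp Require Import all_boot all_order all_algebra.
From mathcomp Require Import mpoly ring ring_quotient generic_quotient.
From Stdlib Require Import ClassicalEpsilon.
Import GRing.Theory.
Local Open Scope ring_scope.
Set Implicit Arguments. Unset Strict Implicit. Unset Printing Implicit Defensive.

Lemma mpoly_rmorph_ext (n : nat) (R : comNzRingType) (S : comPzRingType)
    (g1 g2 : {rmorphism {mpoly R[n]} -> S}) :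
  (forall c, g1 c%:MP = g2 c%:MP) -> (forall i, g1 'X_i = g2 'X_i) -> g1 =1 g2.
Proof.
move=> eqC eqX; elim/mpolyind => [|c m q _ _ ih]; first by rewrite !rmorph0.
rewrite !rmorphD ih -mul_mpolyC !rmorphM eqC mpolyXE_id !rmorph_prod.
by congr (_ * _ + _); apply: eq_bigr => i _; rewrite !rmorphXn eqX.
Qed.

Lemma mderiv_mpolyX (n : nat) (R : comNzRingType) (i j : 'I_n) :
  mderiv j ('X_i : {mpoly R[n]}) = (i == j)%:R.
Proof.
rewrite mderivX mnm1E; case: eqP => [->|_]; last by rewrite scale0r.
rewrite (_ : U_(j) - U_(j) = 0)%MM ?mpolyX0 ?scale1r //.
by apply/mnmP => l; rewrite mnmBE subnn mnm0E.
Qed.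

Lemma expr_eq0_sqr0 (R : pzRingType) (p : nat) (x : R) :
  (1 < p)%N -> x * x = 0 -> x ^+ p = 0.
Proof. by case: p => [|[|e]] // _ x2; rewrite !exprSr -mulrA x2 mulr0. Qed.

Definition rmorph_of (R S : pzRingType) (g : R -> S) (gB : zmod_morphism g)
    (gM : monoid_morphism g) : {rmorphism R -> S} :=
  HB.pack g (GRing.isZmodMorphism.Build R S g gB) (GRing.isMonoidMorphism.Build R S g gM).

Section IdealMembership.
Variables (R : comNzRingType) (m : nat) (f : 'I_m -> R).

Lemma in_ideal0 : in_ideal f 0.
Proof. by exists (fun=> 0); rewrite big1 // => j _; rewrite mul0r. Qed.

Lemma in_idealD x y : in_ideal f x -> in_ideal f y -> in_ideal f (x + y).
Proof.
move=> [c ->] [d ->]; exists (fun j => c j + d j).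
by rewrite -big_split; apply: eq_bigr => j _; rewrite mulrDl.
Qed.

Lemma in_idealMl a x : in_ideal f x -> in_ideal f (a * x).
Proof.
move=> [c ->]; exists (fun j => a * c j).
by rewrite mulr_sumr; apply: eq_bigr => j _; rewrite mulrA.
Qed.

Lemma in_ideal_gen i : in_ideal f (f i).
Proof.
exists (fun j => (j == i)%:R); rewrite (bigD1 i) //= eqxx mul1r big1 ?addr0 //.
by move=> j /negPf ->; rewrite mul0r.
Qed.

Lemma in_ideal_sum (I : finType) (F : I -> R) :
  (forall i, in_ideal f (F i)) -> in_ideal f (\sum_i F i).
Proof. by move=> FI; elim/big_rec: _ => [|i x _]; [exact: in_ideal0|exact: in_idealD]. Qed.

End IdealMembership.

Section IdealQuotient.
Variables (R : comNzRingType) (m : nat) (f : 'I_m -> R).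
Hypothesis f_proper : ~ in_ideal f 1.

(* Ideal membership is not decidable in general; the boolean predicate needed
   by the quotient construction is obtained classically. *)
Definition ideal_pred : pred R := fun x => excluded_middle_informative (in_ideal f x).

Lemma ideal_predP x : reflect (in_ideal f x) (x \in ideal_pred).
Proof. by rewrite unfold_in /ideal_pred; case: excluded_middle_informative; constructor. Qed.

Lemma ideal_pred_closed : idealr_closed ideal_pred.
Proof.
rewrite /idealr_closed; split; first exact/ideal_predP/in_ideal0.
  by apply/negP => /ideal_predP.
move=> a u v /ideal_predP fu /ideal_predP fv.
by apply/ideal_predP/in_idealD => //; apply: in_idealMl.
Qed.

Definition ideal_of : idealr R :=
  HB.pack ideal_pred (isIdealr.Build R ideal_pred ideal_pred_closed).

Definition quot_ideal : comNzRingType := {ideal_quot ideal_of}.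

Definition quot_pi : {rmorphism R -> quot_ideal} := \pi%qT.

Lemma quot_pi_eq0 x : quot_pi x = 0 <-> in_ideal f x.
Proof.
rewrite -(rmorph0 quot_pi) /quot_pi; split.
  by move/eqP; rewrite -Quotient.idealrBE subr0 => /ideal_predP.
by move=> fx; apply/eqP; rewrite -Quotient.idealrBE subr0; exact/ideal_predP.
Qed.

Lemma quot_pi_surj z : exists x, quot_pi x = z.
Proof. by exists (repr z); rewrite /quot_pi /= reprK. Qed.

Lemma quot_pi_eq x y : quot_pi x = quot_pi y <-> in_ideal f (x - y).
Proof.
rewrite -quot_pi_eq0 rmorphB.
by split=> [->|/eqP]; rewrite ?subrr // subr_eq0 => /eqP.
Qed.

End IdealQuotient.

Section QuotientLift.
Variables (R S : comNzRingType) (m l : nat) (f : 'I_m -> R) (e : 'I_l -> S).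
Hypotheses (f_proper : ~ in_ideal f 1) (e_proper : ~ in_ideal e 1).
Variables (g : {rmorphism R -> S}) (g_ideal : forall x, in_ideal f x -> in_ideal e (g x)).

Definition quot_lift_fun (z : quot_ideal f_proper) : quot_ideal e_proper :=
  quot_pi e_proper (g (repr z)).

Lemma quot_lift_funE x : quot_lift_fun (quot_pi f_proper x) = quot_pi e_proper (g x).
Proof.
apply/(quot_pi_eq e_proper); rewrite -rmorphB; apply/g_ideal/(quot_pi_eq f_proper).
exact: reprK.
Qed.

Lemma quot_lift_fun_is_zmod_morphism : zmod_morphism quot_lift_fun.
Proof.
move=> z1 z2; have [x1 <-] := quot_pi_surj z1.
have [x2 <-] := quot_pi_surj z2.
by rewrite -rmorphB !quot_lift_funE !rmorphB.
Qed.

Lemma quot_lift_fun_is_monoid_morphism : monoid_morphism quot_lift_fun.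
Proof.
split; first by rewrite -(rmorph1 (quot_pi f_proper)) quot_lift_funE !rmorph1.
move=> z1 z2; have [x1 <-] := quot_pi_surj z1.
have [x2 <-] := quot_pi_surj z2.
by rewrite -rmorphM !quot_lift_funE !rmorphM.
Qed.

Definition quot_lift : {rmorphism quot_ideal f_proper -> quot_ideal e_proper} :=
  rmorph_of quot_lift_fun_is_zmod_morphism quot_lift_fun_is_monoid_morphism.

Lemma quot_liftE x : quot_lift (quot_pi f_proper x) = quot_pi e_proper (g x).
Proof. exact: quot_lift_funE. Qed.

End QuotientLift.

Lemma big_ord_ltS (V : nmodType) (m : nat) (G : 'I_m -> V) (i : 'I_m) :
  \sum_(j < m | (j < i.+1)%N) G j = G i + \sum_(j < m | (j < i)%N) G j.
Proof.
rewrite (bigD1 i) ?ltnSn //=; congr (_ + _); apply: eq_bigl => j.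
by rewrite ltnS leq_eqVlt -val_eqE /=; case: ltngtP.
Qed.

(* [red] models W_2(k)[x] -> k[x]: its kernel is pi S, pi^2 = 0, and the
   annihilator of pi lies in the kernel. *)
Section SquareZeroLift.
Variables (S T : comNzRingType) (red : {rmorphism S -> T}) (pi : S).
Hypothesis red_surj : forall t, exists s, red s = t.
Hypothesis red_eq0 : forall s, red s = 0 <-> exists b, s = pi * b.
Hypothesis red_ann : forall s, pi * s = 0 -> red s = 0.
Hypothesis pi_sqr0 : pi * pi = 0.

Lemma red_lift_fun (I : Type) (h : I -> T) :
  exists ht : I -> S, forall i, red (ht i) = h i.
Proof. exact: (choice (fun i s => red s = h i)). Qed.

Lemma red_piM s : red (pi * s) = 0.
Proof. by apply/red_eq0; exists s. Qed.

Variables (m : nat) (f : 'I_m -> T) (F : 'I_m -> S).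
Hypothesis red_F : forall j, red (F j) = f j.

Lemma red_lift_comb (Q : pred 'I_m) (e : 'I_m -> T) x :
  red x = \sum_(j | Q j) e j * f j ->
  exists et b, x = \sum_(j | Q j) et j * F j + pi * b.
Proof.
have [et etE] := red_lift_fun e; move=> xE; exists et.
have [b bE] : exists b, x - \sum_(j | Q j) et j * F j = pi * b.
  apply/red_eq0/eqP; rewrite rmorphB rmorph_sum xE subr_eq0.
  by apply/eqP/eq_bigr => j _; rewrite rmorphM etE red_F.
by exists b; rewrite -bE addrC subrK.
Qed.

Hypothesis f_regular : regular_seq f.

Lemma relation_lift_step (i : 'I_m) (c : 'I_m -> S) :
  red (\sum_(j < m | (j < i.+1)%N) c j * F j) = 0 ->
  exists c' del, \sum_(j < m | (j < i.+1)%N) c j * F j =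
                 \sum_(j < m | (j < i)%N) c' j * F j + pi * (del * F i).
Proof.
rewrite big_ord_ltS rmorphD rmorphM red_F => /eqP; rewrite addrC addr_eq0 => /eqP red_ci.
have [e eE] : in_ideal_lt f i (red (c i)).
  case: f_regular => regf _; apply: regf; exists (fun j => - red (c j)).
  by rewrite red_ci rmorph_sum -sumrN; apply: eq_bigr => j _; rewrite rmorphM red_F mulNr.
have [et [del ciE]] := red_lift_comb eE.
exists (fun j => c j + et j * F i), del.
rewrite ciE mulrDl big_distrl /= addrA -big_split /= mulrA; congr (_ + _).
by apply: eq_bigr => j _; rewrite mulrDl mulrAC.
Qed.

Lemma relation_lift_lt (i : nat) (c : 'I_m -> S) : (i <= m)%N ->
  red (\sum_(j < m | (j < i)%N) c j * F j) = 0 ->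
  exists d, \sum_(j < m | (j < i)%N) c j * F j = pi * \sum_(j < m | (j < i)%N) d j * F j.
Proof.
elim: i c => [c _ _|i IHi c im].
  by exists (fun=> 0); rewrite !big_pred0 ?mulr0.
pose io : 'I_m := Ordinal im; rewrite -[i]/(val io).
move=> red0; have [c' [del cE]] := relation_lift_step red0.
have [|d dE] := IHi c' (ltnW im); first by move: red0; rewrite cE rmorphD red_piM addr0.
rewrite cE; exists (fun j => if j == io then del else d j).
rewrite big_ord_ltS eqxx dE mulrDr addrC; congr (_ + _ * _).
by apply: eq_bigr => j; case: eqP => [->|//]; rewrite ltnn.
Qed.

Lemma relation_lift (c : 'I_m -> S) : red (\sum_j c j * F j) = 0 ->
  exists d, \sum_j c j * F j = pi * \sum_j d j * F j.
Proof.
have all_lt (G : 'I_m -> S) : \sum_j G j = \sum_(j < m | (j < m)%N) G j.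
  by apply: eq_bigl => j; rewrite ltn_ord.
by rewrite all_lt => /(relation_lift_lt (leqnn m)) [d dE]; exists d; rewrite all_lt.
Qed.

Lemma reduce_ideal x : in_ideal F x -> in_ideal f (red x).
Proof.
move=> [c ->]; exists (red \o c); rewrite rmorph_sum.
by apply: eq_bigr => j _; rewrite rmorphM red_F.
Qed.

Lemma lift_ideal_proper : ~ in_ideal F 1.
Proof. by case: f_regular => _ f_proper /reduce_ideal; rewrite rmorph1. Qed.

Lemma lift_ideal_torsion a : in_ideal F (pi * a) -> exists b, in_ideal F (a - pi * b).
Proof.
move=> [c cE]; have [|d dE] := relation_lift (c := c); first by rewrite -cE red_piM.
have [b bE] : exists b, a - \sum_j d j * F j = pi * b.
  by apply/red_eq0/red_ann; rewrite mulrBr cE dE subrr.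
by exists b; rewrite -bE opprB addrC subrK; exists d.
Qed.

Lemma lift_ideal_mod x : in_ideal f (red x) -> exists b, in_ideal F (x - pi * b).
Proof.
move=> [c cE]; have [ct [b ->]] := red_lift_comb (Q := xpredT) cE.
by exists b; rewrite addrK; exists ct.
Qed.

Lemma lift_idealM x : in_ideal f (red x) -> in_ideal F (pi * x).
Proof.
move=> /lift_ideal_mod [b /(in_idealMl pi)].
by rewrite mulrBr mulrA pi_sqr0 mul0r subr0.
Qed.

End SquareZeroLift.

HB.instance Definition _ (W : comNzRingType) (n p : nat) (sigma : {rmorphism W -> W}) :=
  GRing.RMorphism.copy (@Ftilde W n p sigma)
    (mmap (@mpolyC n W \o sigma) (fun i : 'I_n => 'X_i ^+ p)).

Section Ftilde.
Variables (W : comNzRingType) (n p : nat) (sigma : {rmorphism W -> W}).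

Lemma FtildeE : Ftilde p sigma =1 mmap (@mpolyC n W \o sigma) (fun i => 'X_i ^+ p).
Proof. by []. Qed.

Lemma FtildeC c : Ftilde p sigma c%:MP_[n] = (sigma c)%:MP.
Proof. by rewrite FtildeE mmapC. Qed.

Lemma FtildeX i : Ftilde p sigma 'X_i = 'X_i ^+ p :> {mpoly W[n]}.
Proof. by rewrite FtildeE mmapX mmap1U. Qed.

End Ftilde.

Section Taylor.
Variables (W : comNzRingType) (n p : nat) (sigma : {rmorphism W -> W}).
Hypothesis p_sqr0 : (p%:R * p%:R : {mpoly W[n]}) = 0.
Variable h : 'I_n -> {mpoly W[n]}.

Local Notation Ft := (Ftilde p sigma).

Definition frob_subst : {rmorphism {mpoly W[n]} -> {mpoly W[n]}} :=
  mmap (@mpolyC n W \o sigma) (fun i => 'X_i ^+ p + p%:R * h i).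

Lemma frob_substC c : frob_subst c%:MP = (sigma c)%:MP.
Proof. exact: mmapC. Qed.

Lemma frob_substX i : frob_subst 'X_i = 'X_i ^+ p + p%:R * h i.
Proof. by rewrite /= mmapX mmap1U. Qed.

Definition frob_deriv (G : {mpoly W[n]}) := \sum_(j < n) Ft (mderiv j G) * h j.

Lemma frob_derivD : {morph frob_deriv : x y / x + y}.
Proof.
move=> x y; rewrite /frob_deriv -big_split; apply: eq_bigr => j _.
by rewrite mderivD rmorphD mulrDl.
Qed.

Lemma frob_derivN : {morph frob_deriv : x / - x}.
Proof.
move=> x; rewrite /frob_deriv -sumrN; apply: eq_bigr => j _.
by rewrite mderivN rmorphN mulNr.
Qed.

Lemma frob_derivM x y : frob_deriv (x * y) = Ft y * frob_deriv x + Ft x * frob_deriv y.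
Proof.
rewrite /frob_deriv !mulr_sumr -big_split; apply: eq_bigr => j _.
by rewrite mderivM rmorphD !rmorphM /=; ring.
Qed.

Lemma frob_derivC c : frob_deriv c%:MP = 0.
Proof. by rewrite /frob_deriv big1 // => j _; rewrite mderivC rmorph0 mul0r. Qed.

Lemma frob_deriv_nat k : frob_deriv k%:R = 0.
Proof. by rewrite -mpolyC_nat frob_derivC. Qed.

Definition taylor (G : {mpoly W[n]}) := Ft G + p%:R * frob_deriv G.

Lemma taylor_is_zmod_morphism : zmod_morphism taylor.
Proof. by move=> x y; rewrite /taylor rmorphB frob_derivD frob_derivN mulrBr addrACA opprD. Qed.

Lemma taylor_is_monoid_morphism : monoid_morphism taylor.
Proof.
split; first by rewrite /taylor -mpolyC1 frob_derivC mulr0 addr0 rmorph1.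
move=> x y; rewrite /taylor rmorphM frob_derivM.
have -> : (Ft x + p%:R * frob_deriv x) * (Ft y + p%:R * frob_deriv y) =
  Ft x * Ft y + p%:R * (Ft y * frob_deriv x + Ft x * frob_deriv y)
  + (p%:R * p%:R) * (frob_deriv x * frob_deriv y) by ring.
by rewrite p_sqr0 mul0r addr0.
Qed.

Lemma frob_subst_taylor G : frob_subst G = Ft G + p%:R * frob_deriv G.
Proof.
apply: (mpoly_rmorph_ext
  (g2 := rmorph_of taylor_is_zmod_morphism taylor_is_monoid_morphism)) => [c|i];
  rewrite -[RHS]/(Ft _ + _ * frob_deriv _).
  by rewrite frob_derivC mulr0 addr0 FtildeC frob_substC.
rewrite FtildeX frob_substX; congr (_ + _ * _).
rewrite /frob_deriv (bigD1 i) //= mderiv_mpolyX eqxx rmorph1 mul1r big1 ?addr0 //.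
by move=> j /negPf ji; rewrite mderiv_mpolyX eq_sym ji rmorph0 mul0r.
Qed.

Lemma frob_subst_lift (ft u P : {mpoly W[n]}) : (1 < p)%N ->
  p%:R * P = Ft ft - ft ^+ p ->
  exists S, frob_subst (ft + p%:R * u) =
    (ft + p%:R * u) * S + p%:R * (P + Ft u + frob_deriv ft).
Proof.
move=> p_gt1 PE; set F := ft + p%:R * u.
have puXp : (- (p%:R * u)) ^+ p = 0.
  by apply: expr_eq0_sqr0 => //; rewrite mulrNN mulrACA p_sqr0 mul0r.
have [S ftXp] : exists S, ft ^+ p = F * S.
  exists (\sum_(i < p) ft ^+ (p.-1 - i) * (- (p%:R * u)) ^+ i).
  by rewrite -[LHS]subr0 -{1}puXp subrXX opprK.
have FtF : Ft F = ft ^+ p + p%:R * (P + Ft u).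
  by rewrite rmorphD rmorphM rmorph_nat mulrDr PE; ring.
have dF : frob_deriv F = frob_deriv ft + p%:R * frob_deriv u.
  by rewrite frob_derivD frob_derivM frob_deriv_nat mulr0 add0r rmorph_nat.
exists S; rewrite frob_subst_taylor FtF dF ftXp [p%:R * (_ + p%:R * _)]mulrDr.
by rewrite mulrA p_sqr0 mul0r addr0 -addrA -mulrDr.
Qed.

End Taylor.

Section ReductionModp.
Variables (k : fieldType) (p : nat) (W : comNzRingType).
Variables (piW : {rmorphism W -> k}) (sigma : {rmorphism W -> W}) (n : nat).
Hypotheses (p_char : p \in [pchar k]) (W2 : is_W2 p piW sigma).

Local Notation red := (map_mpoly (n:=n) piW).

Lemma natp_mpoly_eq0 : (p%:R : {mpoly k[n]}) = 0.
Proof. by rewrite -mpolyC_nat (pcharf0 p_char) mpolyC0. Qed.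

Lemma natp_sqr0 : (p%:R * p%:R : W) = 0.
Proof. by case: W2 => _ _ p_tors _; apply/p_tors; rewrite rmorph_nat (pcharf0 p_char). Qed.

Lemma natp_mpoly_sqr0 : (p%:R * p%:R : {mpoly W[n]}) = 0.
Proof. by rewrite -natrM -mpolyC_nat natrM natp_sqr0 mpolyC0. Qed.

Lemma red_surj r : exists a, red a = r.
Proof.
case: W2 => piW_surj _ _ _.
elim/mpolyind: r => [|c m q _ _ [a <-]]; first by exists 0; rewrite rmorph0.
have [w <-] := piW_surj c; exists (w *: 'X_[m] + a).
by rewrite rmorphD /= map_mpolyZ map_mpolyX.
Qed.

Lemma red_eq0 a : red a = 0 <-> exists b, a = p%:R * b.
Proof.
split; last by move=> [b ->]; rewrite rmorphM rmorph_nat natp_mpoly_eq0 mul0r.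
case: W2 => _ piW_eq0 _ _; move/mpolyP; elim/mpolyind: a => [|c m q qm _ IHq] a0.
  by exists 0; rewrite mulr0.
have qm0 : q@_m = 0 by apply: memN_msupp_eq0.
have cm0 : piW c = 0.
  have := a0 m; rewrite mcoeff_map_mpoly mcoeffD mcoeffZ mcoeffX eqxx.
  by rewrite mulr1 qm0 addr0 mcoeff0.
have [|b ->] := IHq.
  move=> m'; rewrite mcoeff_map_mpoly mcoeff0; have [<-|mm'] := eqVneq m m'.
    by rewrite qm0 raddf0.
  have := a0 m'; rewrite mcoeff_map_mpoly mcoeffD mcoeffZ mcoeffX (negbTE mm').
  by rewrite mulr0 add0r mcoeff0.
have [v ->] := (piW_eq0 c).1 cm0; exists (v *: 'X_[m] + b).
by rewrite mulrDr -mpolyC_nat [_%:MP * (_ *: _)]mul_mpolyC scalerA.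
Qed.

Lemma red_ann a : p%:R * a = 0 -> red a = 0.
Proof.
case: W2 => _ _ p_tors _ pa0; apply/mpolyP => m.
rewrite mcoeff_map_mpoly mcoeff0; apply/p_tors.
by rewrite -mcoeffCM mpolyC_nat pa0 mcoeff0.
Qed.

Lemma red_Ftilde G : red (Ftilde p sigma G) = red G ^+ p.
Proof.
have pchar_kx : p \in [pchar {mpoly k[n]}] := rmorph_pchar (@mpolyC n k) p_char.
apply: (mpoly_rmorph_ext (g1 := red \o Ftilde p sigma)
                         (g2 := pFrobenius_aut pchar_kx \o red)) => [c|i] /=.
  rewrite FtildeC !map_mpolyC pFrobenius_autE -rmorphXn; congr _%:MP.
  by case: W2 => _ _ _; apply.
by rewrite FtildeX pFrobenius_autE rmorphXn; congr (_ ^+ _); apply: map_mpolyX.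
Qed.

Lemma red_mderiv i G : red (mderiv i G) = mderiv i (red G).
Proof.
elim/mpolyind: G => [|c m q _ _ IHq]; first by rewrite !raddf0.
rewrite !raddfD /= IHq mderivZ mderivX scalerA map_mpolyZ map_mpolyX.
by rewrite !map_mpolyZ mderivZ map_mpolyX mderivX rmorphM rmorph_nat scalerA.
Qed.

Lemma red_frob_deriv (h : 'I_n -> {mpoly W[n]}) G :
  red (frob_deriv p sigma h G) = \sum_(j < n) mderiv j (red G) ^+ p * red (h j).
Proof.
rewrite rmorph_sum /=; apply: eq_bigr => j _.
by rewrite rmorphM /= red_Ftilde red_mderiv.
Qed.

End ReductionModp.

Section LiftableOfStableLift.
Variables (k : fieldType) (p : nat) (W : comNzRingType).
Variables (piW : {rmorphism W -> k}) (sigma : {rmorphism W -> W}) (n m : nat).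
Hypotheses (p_char : p \in [pchar k]) (W2 : is_W2 p piW sigma).
Variable f : 'I_m -> {mpoly k[n]}.
Hypothesis f_regular : regular_seq f.
Variables (F : 'I_m -> {mpoly W[n]}) (phi : {rmorphism {mpoly W[n]} -> {mpoly W[n]}}).

Local Notation red := (map_mpoly (n:=n) piW).

Hypothesis red_F : forall i, red (F i) = f i.
Hypothesis phiC : forall c, phi c%:MP = (sigma c)%:MP.
Hypothesis red_phi : forall G, red (phi G) = red G ^+ p.
Hypothesis phi_stable : forall i, in_ideal F (phi (F i)).

Let f_proper : ~ in_ideal f 1 := f_regular.2.
Let F_proper : ~ in_ideal F 1 := lift_ideal_proper red_F f_regular.

Lemma phi_ideal x : in_ideal F x -> in_ideal F (phi x).
Proof.
move=> [c ->]; rewrite rmorph_sum; apply: in_ideal_sum => j.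
by rewrite rmorphM; apply: in_idealMl.
Qed.

Lemma frobenius_liftable_of_stable_lift : frobenius_liftable p piW sigma f.
Proof.
pose piAt := quot_pi F_proper; pose q := quot_pi f_proper.
pose iota : {rmorphism W -> quot_ideal F_proper} := piAt \o @mpolyC n W.
have iotaE w : iota w = piAt w%:MP by [].
have iota_p : iota p%:R = piAt p%:R by rewrite iotaE mpolyC_nat.
pose piA := quot_lift F_proper f_proper (reduce_ideal red_F).
exists (quot_ideal F_proper), iota, (quot_lift F_proper F_proper phi_ideal),
  (quot_ideal f_proper), q, piA.
split; [|split; [|split; [|split; [|split; [|split; [|split]]]]]].
- move=> a; have [a0 <-] := quot_pi_surj a; rewrite iota_p -rmorphM.
  move/(quot_pi_eq0 F_proper).
  move/(lift_ideal_torsion (red_surj W2) (red_eq0 p_char W2) (red_ann W2) red_F f_regular).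
  by move=> [b bE]; exists (piAt b); rewrite -rmorphM; apply/quot_pi_eq.
- move=> a; have [a0 <-] := quot_pi_surj a; rewrite /piA quot_liftE quot_pi_eq0; split.
    move/(lift_ideal_mod (red_surj W2) (red_eq0 p_char W2) red_F) => [b bE].
    by exists (piAt b); rewrite iota_p -rmorphM; apply/quot_pi_eq.
  move=> [b ab] /=; have [b0 b0E] := quot_pi_surj b.
  rewrite -[red a0]subr0 -(red_piM (red_eq0 p_char W2) b0) -rmorphB.
  by apply/(reduce_ideal red_F)/(quot_pi_eq F_proper); rewrite ab -b0E iota_p rmorphM.
- move=> b; have [r <-] := quot_pi_surj b; have [a <-] := red_surj W2 r.
  by exists (piAt a); rewrite /piA quot_liftE.
- exact: quot_pi_eq0.
- exact: quot_pi_surj.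
- by move=> w; rewrite iotaE /piA quot_liftE; congr (q _); apply: map_mpolyC.
- by move=> w; rewrite !iotaE quot_liftE phiC.
- move=> a; have [a0 <-] := quot_pi_surj a.
  rewrite (quot_liftE _ _ phi_ideal) /piA !quot_liftE -rmorphXn.
  by congr (q _); apply: red_phi.
Qed.

End LiftableOfStableLift.

Section Criterion.
Variables (k : fieldType) (p : nat) (W : comNzRingType).
Variables (piW : {rmorphism W -> k}) (sigma : {rmorphism W -> W}) (n m : nat).
Variables (f : 'I_m -> {mpoly k[n]}) (ft : 'I_m -> {mpoly W[n]}) (Pf : 'I_m -> {mpoly k[n]}).
Hypotheses (p_prime : prime p) (p_char : p \in [pchar k]) (W2 : is_W2 p piW sigma).

Local Notation red := (map_mpoly (n:=n) piW).

Hypothesis red_ft : forall i, red (ft i) = f i.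
Hypothesis ft_P : forall i, is_P p piW sigma (ft i) (Pf i).

Let p_sqr0 := natp_mpoly_sqr0 n p_char W2.

Lemma red_frob_subst (ht : 'I_n -> {mpoly W[n]}) G :
  red (frob_subst p sigma ht G) = red G ^+ p.
Proof.
by rewrite frob_subst_taylor // rmorphD (red_piM (red_eq0 p_char W2)) addr0 /= red_Ftilde.
Qed.

Lemma frob_subst_lift_defect (ht : 'I_n -> {mpoly W[n]}) (u : {mpoly W[n]}) i :
  exists S D,
    frob_subst p sigma ht (ft i + p%:R * u) = (ft i + p%:R * u) * S + p%:R * D
    /\ red D = Pf i + red u ^+ p + \sum_(j < n) mderiv j (f i) ^+ p * red (ht j).
Proof.
have [P [red_P PE]] := ft_P i; rewrite -mul_mpolyC mpolyC_nat in PE.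
have [S SE] := frob_subst_lift p_sqr0 ht u (prime_gt1 p_prime) PE.
exists S, (P + Ftilde p sigma u + frob_deriv p sigma ht (ft i)); split => //.
by rewrite !rmorphD /= red_P red_Ftilde // red_frob_deriv // red_ft.
Qed.

Lemma frobenius_liftable_of_congruence
    (h : 'I_n -> {mpoly k[n]}) (g : 'I_m -> {mpoly k[n]}) :
  regular_seq f ->
  (forall i, in_ideal f (Pf i + g i ^+ p - \sum_(j < n) (mderiv j (f i)) ^+ p * h j)) ->
  frobenius_liftable p piW sigma f.
Proof.
move=> f_regular fcong.
have [u red_u] := red_lift_fun (red_surj W2) g.
have [ht red_ht] := red_lift_fun (red_surj W2) (fun j => - h j).
pose F i := ft i + p%:R * u i.
have red_F i : red (F i) = f i.
  by rewrite rmorphD (red_piM (red_eq0 p_char W2)) addr0 /= red_ft.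
apply: (frobenius_liftable_of_stable_lift p_char W2 f_regular red_F
         (phi := frob_subst p sigma ht)) => [c|G|i].
- exact: frob_substC.
- exact: red_frob_subst.
have [S [D [-> red_D]]] := frob_subst_lift_defect ht (u i) i.
apply: in_idealD; first by rewrite mulrC; apply/in_idealMl/in_ideal_gen.
apply: (lift_idealM (red_surj W2) (red_eq0 p_char W2) p_sqr0 red_F).
rewrite /= red_D red_u; under eq_bigr => j _ do rewrite red_ht mulrN.
by rewrite sumrN; exact: fcong.
Qed.

Section LiftData.
Variables (At : comNzRingType) (iota : {rmorphism W -> At}) (Ft : {rmorphism At -> At}).
Variables (B : comPzRingType) (q : {rmorphism {mpoly k[n]} -> B}) (piA : {rmorphism At -> B}).
Hypothesis At_flat : forall a, iota p%:R * a = 0 -> exists b, a = iota p%:R * b.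
Hypothesis piA_eq0 : forall a, piA a = 0 <-> exists b, a = iota p%:R * b.
Hypothesis piA_surj : forall b, exists a, piA a = b.
Hypothesis q_eq0 : forall r, q r = 0 <-> in_ideal f r.
Hypothesis q_surj : forall b, exists r, q r = b.
Hypothesis piA_iota : forall w, piA (iota w) = q (piW w)%:MP_[n].
Hypothesis Ft_iota : forall w, Ft (iota w) = iota (sigma w).
Hypothesis piA_Ft : forall a, piA (Ft a) = piA a ^+ p.

Section LiftedVariables.
Variables (X : 'I_n -> At).
Hypothesis piA_X : forall i, piA (X i) = q 'X_i.

Let phi : {rmorphism {mpoly W[n]} -> At} := mmap iota X.

Lemma piA_phi c : piA (phi c) = q (red c).
Proof.
apply: (mpoly_rmorph_ext (g1 := piA \o phi) (g2 := q \o red)) => [w|i] /=.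
  by rewrite mmapC piA_iota map_mpolyC.
by rewrite mmapX mmap1U piA_X map_mpolyX.
Qed.

Lemma natp_mul_phi b : exists c, iota p%:R * b = phi (p%:R * c).
Proof.
have [r rE] := q_surj (piA b); have [c cE] := red_surj W2 r.
have [e eE] : exists e, b - phi c = iota p%:R * e.
  by apply/piA_eq0; rewrite rmorphB piA_phi cE rE subrr.
exists c; rewrite -[b](subrK (phi c)) eE mulrDr mulrA -rmorphM.
by rewrite (natp_sqr0 p_char W2) rmorph0 mul0r add0r rmorphM !rmorph_nat.
Qed.

Lemma Ft_phi : exists ht, forall c, Ft (phi c) = phi (frob_subst p sigma ht c).
Proof.
have [ht htE] : exists ht, forall j, Ft (X j) = phi ('X_j ^+ p + p%:R * ht j).
  apply: (choice (fun j c => Ft (X j) = phi ('X_j ^+ p + p%:R * c))) => j.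
  have [b bE] : exists b, Ft (X j) - X j ^+ p = iota p%:R * b.
    by apply/piA_eq0; rewrite rmorphB rmorphXn piA_Ft subrr.
  have [c cE] := natp_mul_phi b; exists c.
  by rewrite rmorphD -cE -bE rmorphXn /= mmapX mmap1U addrC subrK.
exists ht; apply: (mpoly_rmorph_ext (g1 := Ft \o phi) (g2 := phi \o frob_subst p sigma ht)).
  by move=> c; rewrite /= frob_substC !mmapC Ft_iota.
by move=> j; rewrite /= mmapX mmap1U frob_substX; apply: htE.
Qed.

Lemma phi_ft_lift i : exists v, phi (ft i + p%:R * v) = 0.
Proof.
have [b bE] : exists b, phi (ft i) = iota p%:R * b.
  by apply/piA_eq0; rewrite piA_phi red_ft; apply/q_eq0/in_ideal_gen.
have [c cE] := natp_mul_phi b; exists (- c).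
by rewrite rmorphD bE cE -rmorphD mulrN subrr rmorph0.
Qed.

Lemma congruence_of_lifted_variables : exists h g, forall i,
  in_ideal f (Pf i + g i ^+ p - \sum_(j < n) (mderiv j (f i)) ^+ p * h j).
Proof.
have [ht Ft_phiE] := Ft_phi; have [v phi_v] := choice _ phi_ft_lift.
exists (fun j => - red (ht j)), (fun i => red (v i)) => i.
have [S [D [substE red_D]]] := frob_subst_lift_defect ht (v i) i.
have : phi (p%:R * D) = 0.
  have := Ft_phiE (ft i + p%:R * v i).
  by rewrite phi_v rmorph0 substE rmorphD rmorphM phi_v mul0r add0r.
rewrite rmorphM rmorph_nat -(rmorph_nat iota) => /At_flat [b bE].
have : piA (phi D) = 0 by apply/piA_eq0; exists b.
rewrite piA_phi => /q_eq0; rewrite red_D /=.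
have -> // : \sum_(j < n) mderiv j (f i) ^+ p * red (ht j) =
             - \sum_(j < n) mderiv j (f i) ^+ p * - red (ht j).
by rewrite -sumrN; apply: eq_bigr => j _; rewrite mulrN opprK.
Qed.

End LiftedVariables.

Lemma congruence_of_lift_data : exists h g, forall i,
  in_ideal f (Pf i + g i ^+ p - \sum_(j < n) (mderiv j (f i)) ^+ p * h j).
Proof.
have [X piA_X] := choice _ (fun i => piA_surj (q 'X_i)).
exact: congruence_of_lifted_variables piA_X.
Qed.

End LiftData.

Lemma congruence_of_frobenius_liftable :
  regular_seq f -> frobenius_liftable p piW sigma f ->
  exists h g, forall i,
    in_ideal f (Pf i + g i ^+ p - \sum_(j < n) (mderiv j (f i)) ^+ p * h j).
Proof.
move=> [_ f_proper] [At [iota [Ft [B [q [piA [At_flat [piA_eq0 [piA_surj]]]]]]]]].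
move=> [q_eq0 [q_surj [piA_iota [Ft_iota piA_Ft]]]].
(* Polynomials can only be evaluated in a nonzero ring, so At is repackaged as
   one; it is nonzero because A is. *)
have At_nz : (1 : At) != 0.
  apply/eqP => At10; apply/f_proper/q_eq0.
  by rewrite rmorph1 -(rmorph1 piA) At10 rmorph0.
pose AtN : comNzRingType := HB.pack At (GRing.PzSemiRing_isNonZero.Build At At_nz).
exact: (@congruence_of_lift_data AtN
  (rmorph_of (rmorphB iota : zmod_morphism (iota : W -> AtN)) (rmorph1 iota, rmorphM iota))
  (rmorph_of (rmorphB Ft : zmod_morphism (Ft : AtN -> AtN)) (rmorph1 Ft, rmorphM Ft))
  B q
  (rmorph_of (rmorphB piA : zmod_morphism (piA : AtN -> B)) (rmorph1 piA, rmorphM piA))).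
Qed.

End Criterion.

Unset Implicit Arguments.

Theorem theorem4p6 (k : fieldType) (p : nat) (W : comNzRingType)
    (piW : {rmorphism W -> k}) (sigma : {rmorphism W -> W}) (n m : nat)
    (f : 'I_m -> {mpoly k[n]}) (ft : 'I_m -> {mpoly W[n]})
    (Pf : 'I_m -> {mpoly k[n]}) :
  prime p -> p \in [pchar k] -> perfect_field k p ->
  is_W2 p piW sigma ->
  regular_seq f ->
  (forall i : 'I_m, map_mpoly piW (ft i) = f i) ->
  (forall i : 'I_m, is_P p piW sigma (ft i) (Pf i)) ->
  frobenius_liftable p piW sigma f <->
  exists (h : 'I_n -> {mpoly k[n]}) (g : 'I_m -> {mpoly k[n]}),
    forall i : 'I_m,
      in_ideal f (Pf i + g i ^+ p
                  - \sum_(j < n) (mderiv j (f i)) ^+ p * h j).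
Proof.
(* Perfectness of k is only needed for the existence of W_2(k), which is_W2
   already provides. *)
move=> p_prime p_char _ W2 f_regular red_ft ft_P; split.
  exact: congruence_of_frobenius_liftable.
by move=> [h [g fcong]]; exact: frobenius_liftable_of_congruence fcong.
Qed.
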